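(* For every sufficiently small $\epsilon>0$ there is a set of $2^{\Omega(\epsilon^{-1/2})}$ distributions supported on $[0,1]$, each having a non-decreasing PDF, such that every two distinct distributions in the set are at Lévy distance $\Omega(\epsilon)$ from each other.
   Context: Lévy distance: $\mathrm{L\acute{e}vy}(F,G)=\inf\{\epsilon: F(v-\epsilon)-\epsilon\le G(v)\le F(v+\epsilon)+\epsilon\ \forall v\}$. (Distributions with non-decreasing PDF are regular, i.e. $qF^{-1}(1-q)$ is concave.) *)

From Stdlib Require Import Reals.
From Coquelicot Require Import Coquelicot.
Open Scope R_scope.

Definition nondec_pdf_on_01 (f : R -> R) : Prop :=
  (forall x, 0 <= f x) /\
  (forall x, x < 0 \/ 1 < x -> f x = 0) /\
  (forall x y, 0 <= x -> x <= y -> y <= 1 -> f x <= f y) /\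
  is_RInt f 0 1 1.

(* The CDF of the density f supported on [0,1]: F(v) = int_{-oo}^v f. *)
Definition cdf_of (f : R -> R) (v : R) : R :=
  RInt f 0 (Rmax 0 (Rmin v 1)).

Definition levy_dist (F G : R -> R) : Rbar :=
  Glb_Rbar (fun e => forall v, F (v - e) - e <= G v /\ G v <= F (v + e) + e).

From Stdlib Require Import Reals.
From Coquelicot Require Import Coquelicot.
Open Scope R_scope.
From Stdlib Require Import Lra Lia Classical ZArith.

(* Cut [0,1] into n = 2k cells.  For a code i < 2^k the density of code i
   is constant on each cell: on cell l it is the base level
   1/2 + (l + 1/2)/n, plus +b/(2n) on cell 2m and -b/(2n) on cell 2m+1,
   where b is bit m of i.  The base level rises by 1/n per cell, so the
   density stays non-decreasing, and paired perturbations keep its mass 1.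
   At the grid point (2m+1)/n the CDF carries exactly the bonus b/(2n^2),
   so codes differing in bit m have CDFs 1/(8k^2) apart there; as all
   these CDFs are 2-Lipschitz, a general Lévy lower bound for Lipschitz
   CDFs gives pairwise Lévy distance >= 1/(24k^2). *)

Fixpoint psum (c : nat -> R) (j : nat) : R :=
  match j with O => 0 | S j' => psum c j' + c j' end.

Lemma is_RInt_step (n : nat) (c : nat -> R) (f : R -> R) :
  (0 < n)%nat ->
  (forall l x, (l < n)%nat -> INR l / INR n < x < INR (S l) / INR n -> f x = c l) ->
  forall j, (j <= n)%nat -> is_RInt f 0 (INR j / INR n) (psum c j / INR n).
Proof.
  intros Hn Hf. assert (Hn' : 0 < INR n) by (apply lt_0_INR; lia).
  induction j as [|j IH]; intros Hj.
  - simpl. replace (0 / INR n) with 0 by (field; lra).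
    exact (is_RInt_point f 0).
  - assert (Hcell : INR j / INR n < INR (S j) / INR n).
    { rewrite S_INR. apply Rmult_lt_compat_r; [apply Rinv_0_lt_compat|]; lra. }
    assert (Hlast : is_RInt f (INR j / INR n) (INR (S j) / INR n) (c j / INR n)).
    { replace (c j / INR n) with (scal (INR (S j) / INR n - INR j / INR n) (c j))
        by (rewrite S_INR; unfold scal; simpl; unfold mult; simpl; field; lra).
      apply is_RInt_ext with (f := fun _ => c j); [|exact (is_RInt_const _ _ (c j))].
      intros x Hx. symmetry. apply Hf; [lia|].
      rewrite Rmin_left in Hx by lra. rewrite Rmax_right in Hx by lra. exact Hx. }
    replace (psum c (S j) / INR n) with (plus (psum c j / INR n) (c j / INR n))
      by (simpl; unfold plus; simpl; field; lra).
    exact (is_RInt_Chasles f _ _ _ _ _ (IH ltac:(lia)) Hlast).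
Qed.

Definition cell (n : nat) (x : R) : nat := Z.to_nat (Int_part (INR n * x)).

Lemma Int_part_nat (l : nat) (y : R) : INR l < y < INR l + 1 -> Int_part y = Z.of_nat l.
Proof.
  intros H. unfold Int_part.
  assert (Hu : (Z.of_nat l + 1)%Z = up y).
  { apply tech_up; rewrite plus_IZR, <- INR_IZR_INZ; simpl; lra. }
  rewrite <- Hu. lia.
Qed.

Lemma Int_part_le (x y : R) : x <= y -> (Int_part x <= Int_part y)%Z.
Proof.
  intros H. destruct (base_Int_part x) as [A B]. destruct (base_Int_part y) as [C D].
  assert (Hlt : IZR (Int_part x) < IZR (Int_part y + 1)) by (rewrite plus_IZR; lra).
  apply lt_IZR in Hlt. lia.
Qed.

Lemma cell_open (n l : nat) (x : R) : (0 < n)%nat ->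
  INR l / INR n < x < INR (S l) / INR n -> cell n x = l.
Proof.
  intros Hn [A B]. assert (Hn' : 0 < INR n) by (apply lt_0_INR; lia).
  unfold cell. rewrite (Int_part_nat l); [lia|].
  rewrite S_INR in B.
  apply Rmult_lt_compat_l with (r := INR n) in A; [|lra].
  apply Rmult_lt_compat_l with (r := INR n) in B; [|lra].
  replace (INR n * (INR l / INR n)) with (INR l) in A by (field; lra).
  replace (INR n * ((INR l + 1) / INR n)) with (INR l + 1) in B by (field; lra).
  lra.
Qed.

Lemma cell_mono (n : nat) (x y : R) : x <= y -> (cell n x <= cell n y)%nat.
Proof.
  intros H. unfold cell.
  assert (Hle := Int_part_le (INR n * x) (INR n * y)
                   ltac:(apply Rmult_le_compat_l; [apply pos_INR|lra])).
  lia.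
Qed.

(* Points of [0,1] lie in cells 0..n (the index n only for x = 1). *)
Lemma cell_le (n : nat) (x : R) : x <= 1 -> (cell n x <= n)%nat.
Proof.
  intros H. unfold cell. destruct (base_Int_part (INR n * x)) as [A _].
  assert (INR n * x <= INR n)
    by (rewrite <- (Rmult_1_r (INR n)) at 2; apply Rmult_le_compat_l; [apply pos_INR|lra]).
  assert (Hle : IZR (Int_part (INR n * x)) <= IZR (Z.of_nat n)) by (rewrite <- INR_IZR_INZ; lra).
  apply le_IZR in Hle. lia.
Qed.

Lemma grid_point_in_01 (n l : nat) : (0 < n)%nat -> (l <= n)%nat ->
  0 <= INR l / INR n <= 1.
Proof.
  intros Hn Hl. assert (Hn' : 0 < INR n) by (apply lt_0_INR; lia).
  split; [apply Rdiv_le_0_compat; [apply pos_INR|lra]|].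
  apply Rmult_le_reg_r with (INR n); [lra|]. unfold Rdiv.
  rewrite Rmult_assoc, Rinv_l, Rmult_1_r, Rmult_1_l by lra. apply le_INR. exact Hl.
Qed.

Lemma cdf_increment (f : R -> R) (M a b : R) :
  nondec_pdf_on_01 f -> (forall x, f x <= M) -> a <= b ->
  0 <= cdf_of f b - cdf_of f a <= M * (b - a).
Proof.
  intros [Hpos [_ [_ Hint]]] HM Hab.
  set (ca := Rmax 0 (Rmin a 1)). set (cb := Rmax 0 (Rmin b 1)).
  assert (Hclamp : 0 <= ca <= cb /\ cb <= 1 /\ cb - ca <= b - a)
    by (unfold ca, cb, Rmax, Rmin; repeat destruct Rle_dec; lra).
  destruct Hclamp as [[H0 H1] [H2 H3]].
  assert (Eb : ex_RInt f 0 cb)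
    by (apply (ex_RInt_Chasles_1 (V:=R_CompleteNormedModule) f 0 cb 1); [lra|exists 1; exact Hint]).
  assert (Ea : ex_RInt f 0 ca)
    by (apply (ex_RInt_Chasles_1 (V:=R_CompleteNormedModule) f 0 ca cb); [lra|exact Eb]).
  assert (Eab : ex_RInt f ca cb)
    by (apply (ex_RInt_Chasles_2 (V:=R_CompleteNormedModule) f 0 ca cb); [lra|exact Eb]).
  assert (Hsplit : cdf_of f b - cdf_of f a = RInt f ca cb).
  { unfold cdf_of. fold ca cb.
    rewrite <- (RInt_Chasles (V:=R_CompleteNormedModule) f 0 ca cb Ea Eab).
    unfold plus; simpl. lra. }
  rewrite Hsplit.
  assert (Hlo := RInt_le (fun _ => 0) f ca cb H1 (ex_RInt_const _ _ _) Eab (fun x _ => Hpos x)).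
  assert (Hhi := RInt_le f (fun _ => M) ca cb H1 Eab (ex_RInt_const _ _ _) (fun x _ => HM x)).
  rewrite RInt_const in Hlo, Hhi.
  unfold scal in Hlo, Hhi; simpl in Hlo, Hhi; unfold mult in Hlo, Hhi; simpl in Hlo, Hhi.
  assert (HM0 : 0 <= M) by (pose proof (Hpos 0); pose proof (HM 0); lra).
  split; [lra|]. assert (M * (cb - ca) <= M * (b - a)) by (apply Rmult_le_compat_l; lra).
  lra.
Qed.

(* If F, G are non-decreasing and L-Lipschitz, a gap D between them at a
   single point forces Lévy distance at least D/(1+L): shifting by e and
   adding e can only close a gap of (1+L) e. *)
Lemma levy_dist_lower_bound (F G : R -> R) (L D v0 : R) :
  (forall a b, a <= b -> 0 <= F b - F a <= L * (b - a)) ->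
  (forall a b, a <= b -> 0 <= G b - G a <= L * (b - a)) ->
  D <= Rabs (F v0 - G v0) -> Rbar_le (Finite (D / (1 + L))) (levy_dist F G).
Proof.
  intros HF HG HD. unfold levy_dist.
  destruct (Glb_Rbar_correct (fun e => forall v, F (v - e) - e <= G v /\ G v <= F (v + e) + e))
    as [_ Hglb].
  apply Hglb. intros e He. simpl.
  assert (HL : 0 <= L) by (pose proof (HF 0 1 ltac:(lra)); lra).
  assert (Hgap : D <= (1 + L) * e -> D / (1 + L) <= e).
  { intros Hle. apply Rmult_le_reg_r with (1 + L); [lra|]. unfold Rdiv.
    rewrite Rmult_assoc, Rinv_l, Rmult_1_r by lra. lra. }
  destruct (Rle_lt_dec 0 e) as [He0|He0].
  - apply Hgap. destruct (Rle_lt_dec 0 (F v0 - G v0)).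
    + rewrite Rabs_pos_eq in HD by lra.
      destruct (He (v0 + e)) as [A _]. replace (v0 + e - e) with v0 in A by ring.
      pose proof (HG v0 (v0 + e) ltac:(lra)). nra.
    + rewrite Rabs_left in HD by lra.
      destruct (He v0) as [_ A]. pose proof (HF v0 (v0 + e) ltac:(lra)). nra.
  - exfalso. destruct (He v0) as [A B]. pose proof (HF (v0 + e) (v0 - e) ltac:(lra)). lra.
Qed.

Lemma distinguishing_bit (k i j : nat) : (i < 2 ^ k)%nat -> (j < 2 ^ k)%nat -> i <> j ->
  exists m, (m < k)%nat /\ Nat.testbit i m <> Nat.testbit j m.
Proof.
  intros Hi Hj Hij. apply NNPP. intros Hnone. apply Hij. apply Nat.bits_inj_iff. intros m.
  destruct (Nat.lt_ge_cases m k) as [Hm|Hm].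
  - destruct (Bool.bool_dec (Nat.testbit i m) (Nat.testbit j m)) as [E|E]; [exact E|].
    exfalso. apply Hnone. exists m. auto.
  - assert (Hhigh : forall a, (a < 2 ^ k)%nat -> Nat.testbit a m = false).
    { intros [|a] Ha; [apply Nat.bits_0|].
      apply Nat.bits_above_log2. apply Nat.log2_lt_pow2 in Ha; lia. }
    rewrite (Hhigh i Hi), (Hhigh j Hj). reflexivity.
Qed.

Definition bit (i m : nat) : R := if Nat.testbit i m then 1 else 0.

Definition perturb (i l : nat) : R := (if Nat.odd l then -1 else 1) * bit i (Nat.div2 l).

Definition level (n i l : nat) : R := /2 + (INR l + /2) / INR n + perturb i l / (2 * INR n).

Lemma perturb_bound (i l : nat) : -1 <= perturb i l <= 1.
Proof. unfold perturb, bit. destruct (Nat.odd l), (Nat.testbit i (Nat.div2 l)); lra. Qed.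

(* The base level rises by 1/n per cell, which dominates the perturbation. *)
Lemma level_mono (n i l l' : nat) : (0 < n)%nat -> (l <= l')%nat -> level n i l <= level n i l'.
Proof.
  intros Hn Hll'. assert (Hn' : 0 < INR n) by (apply lt_0_INR; lia).
  induction Hll' as [|l' _ IH]; [lra|].
  enough (level n i l' <= level n i (S l')) by lra.
  unfold level. rewrite S_INR. pose proof (perturb_bound i l'). pose proof (perturb_bound i (S l')).
  apply Rmult_le_reg_r with (2 * INR n); [lra|]. field_simplify; lra.
Qed.

Lemma level_bounds (n i l : nat) : (2 <= n)%nat -> (l <= n)%nat -> 0 <= level n i l <= 2.
Proof.
  intros Hn Hl. assert (Hn' : 2 <= INR n) by (apply (le_INR 2); exact Hn).
  assert (Hl' : INR l <= INR n) by (apply le_INR; exact Hl).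
  pose proof (perturb_bound i l). pose proof (pos_INR l). unfold level.
  split; apply Rmult_le_reg_r with (2 * INR n); try lra; field_simplify; lra.
Qed.

(* On a pair of cells the perturbations cancel: the sum of levels over the
   first 2m cells is that of the base levels. *)
Lemma psum_level_even (n i m : nat) : (0 < n)%nat ->
  psum (level n i) (2 * m) = INR (2 * m) / 2 + INR (2 * m) ^ 2 / (2 * INR n).
Proof.
  intros Hn. assert (0 < INR n) by (apply lt_0_INR; lia).
  induction m as [|m IH]; [simpl; field; lra|].
  replace (2 * S m)%nat with (S (S (2 * m))) by lia. cbn [psum]. rewrite IH.
  unfold level, perturb. rewrite Nat.odd_succ, Nat.div2_succ_double, Nat.div2_double.
  rewrite Nat.even_mul, Nat.odd_mul, !S_INR. cbn [Nat.even Nat.odd andb negb orb].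
  field. lra.
Qed.

Lemma psum_level_odd (n i m : nat) : (0 < n)%nat ->
  psum (level n i) (S (2 * m)) =
  INR (S (2 * m)) / 2 + INR (S (2 * m)) ^ 2 / (2 * INR n) + bit i m / (2 * INR n).
Proof.
  intros Hn. assert (0 < INR n) by (apply lt_0_INR; lia).
  cbn [psum]. rewrite psum_level_even by lia. unfold level, perturb.
  rewrite Nat.div2_double, Nat.odd_mul, !S_INR. cbn [Nat.even Nat.odd andb negb orb].
  field. lra.
Qed.

Definition density (n i : nat) (x : R) : R :=
  if Rle_dec 0 x then if Rle_dec x 1 then level n i (cell n x) else 0 else 0.

Lemma density_on_cell (n i l : nat) (x : R) : (0 < n)%nat -> (l < n)%nat ->
  INR l / INR n < x < INR (S l) / INR n -> density n i x = level n i l.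
Proof.
  intros Hn Hl Hx.
  pose proof (grid_point_in_01 n l Hn ltac:(lia)).
  pose proof (grid_point_in_01 n (S l) Hn Hl).
  unfold density. destruct (Rle_dec 0 x); [|lra]. destruct (Rle_dec x 1); [|lra].
  rewrite (cell_open n l x Hn Hx). reflexivity.
Qed.

Lemma density_bounds (n i : nat) (x : R) : (2 <= n)%nat -> 0 <= density n i x <= 2.
Proof.
  intros Hn. unfold density. destruct (Rle_dec 0 x); [|lra]. destruct (Rle_dec x 1); [|lra].
  apply level_bounds; [exact Hn| apply cell_le; assumption].
Qed.

Lemma is_RInt_density (n i j : nat) : (0 < n)%nat -> (j <= n)%nat ->
  is_RInt (density n i) 0 (INR j / INR n) (psum (level n i) j / INR n).
Proof.
  intros Hn. apply is_RInt_step; [exact Hn|].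
  intros l x Hl Hx. exact (density_on_cell n i l x Hn Hl Hx).
Qed.

Lemma density_nondec_pdf (k i : nat) : (1 <= k)%nat -> nondec_pdf_on_01 (density (2 * k) i).
Proof.
  intros Hk. assert (Hn : 0 < INR (2 * k)) by (apply lt_0_INR; lia).
  split; [|split; [|split]].
  - intros x. apply density_bounds. lia.
  - intros x Hx. unfold density.
    destruct (Rle_dec 0 x); [|reflexivity]. destruct (Rle_dec x 1); [lra|reflexivity].
  - intros x y H0 H1 H2. unfold density.
    destruct (Rle_dec 0 x); [|lra]. destruct (Rle_dec x 1); [|lra].
    destruct (Rle_dec 0 y); [|lra]. destruct (Rle_dec y 1); [|lra].
    apply level_mono; [lia| apply cell_mono; exact H1].
  - assert (Htot := is_RInt_density (2 * k) i (2 * k) ltac:(lia) (le_n _)).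
    rewrite psum_level_even in Htot by lia.
    replace (INR (2 * k) / INR (2 * k)) with 1 in Htot by (field; lra).
    replace ((INR (2 * k) / 2 + INR (2 * k) ^ 2 / (2 * INR (2 * k))) / INR (2 * k)) with 1
      in Htot by (field; lra).
    exact Htot.
Qed.

Lemma cdf_at_odd_grid_point (n i m : nat) : (0 < n)%nat -> (S (2 * m) <= n)%nat ->
  cdf_of (density n i) (INR (S (2 * m)) / INR n) =
  (INR (S (2 * m)) / 2 + INR (S (2 * m)) ^ 2 / (2 * INR n) + bit i m / (2 * INR n)) / INR n.
Proof.
  intros Hn Hm. pose proof (grid_point_in_01 n (S (2 * m)) Hn Hm).
  unfold cdf_of. rewrite Rmin_left, Rmax_right by lra.
  rewrite <- psum_level_odd by exact Hn.
  apply is_RInt_unique, is_RInt_density; assumption.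
Qed.

Lemma density_levy_separation (k i j : nat) : (1 <= k)%nat ->
  (i < 2 ^ k)%nat -> (j < 2 ^ k)%nat -> i <> j ->
  Rbar_le (Finite (/ (24 * INR k ^ 2)))
          (levy_dist (cdf_of (density (2 * k) i)) (cdf_of (density (2 * k) j))).
Proof.
  intros Hk Hi Hj Hij.
  destruct (distinguishing_bit k i j Hi Hj Hij) as [m [Hm Hbit]].
  assert (HkR : 1 <= INR k) by (apply (le_INR 1); exact Hk).
  assert (Hn : INR (2 * k) = 2 * INR k) by (rewrite mult_INR; simpl; ring).
  assert (Hlip : forall i' a b, a <= b ->
            0 <= cdf_of (density (2 * k) i') b - cdf_of (density (2 * k) i') a <= 2 * (b - a)).
  { intros i' a b Hab. apply cdf_increment; [apply density_nondec_pdf; exact Hk| |exact Hab].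
    intros x. apply density_bounds. lia. }
  replace (/ (24 * INR k ^ 2)) with (/ (8 * INR k ^ 2) / (1 + 2)) by (field; lra).
  apply levy_dist_lower_bound with (v0 := INR (S (2 * m)) / INR (2 * k));
    [apply Hlip | apply Hlip |].
  rewrite !cdf_at_odd_grid_point by lia. rewrite Hn.
  assert (Hpos : 0 < / (8 * INR k ^ 2)) by (apply Rinv_0_lt_compat; nra).
  unfold bit. destruct (Nat.testbit i m), (Nat.testbit j m); try congruence.
  - rewrite Rabs_pos_eq; [right; field; lra|].
    match goal with |- 0 <= ?a => replace a with (/ (8 * INR k ^ 2)) by (field; lra) end. lra.
  - rewrite Rabs_left; [right; field; lra|].
    match goal with |- ?a < 0 => replace a with (- / (8 * INR k ^ 2)) by (field; lra) end. lra.
Qed.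

Lemma Rpower_neg_half_sq (eps : R) : 0 < eps ->
  eps * (Rpower eps (- (1 / 2)) * Rpower eps (- (1 / 2))) = 1.
Proof.
  intros He. rewrite <- Rpower_plus.
  replace (- (1 / 2) + - (1 / 2)) with (Ropp 1) by field.
  rewrite Rpower_Ropp, Rpower_1 by exact He. field. lra.
Qed.

(* For eps < 1 and x = eps^(-1/2) > 1, k = up x satisfies x <= k <= 2x, so
   there are at least 2^x codes and 1/(24 k^2) >= eps/96. *)
Lemma grid_size (eps : R) : 0 < eps < 1 ->
  exists k : nat, (1 <= k)%nat /\
    Rpower 2 (Rpower eps (- (1 / 2))) <= INR (2 ^ k) /\ eps / 96 <= / (24 * INR k ^ 2).
Proof.
  intros He. set (x := Rpower eps (- (1 / 2))).
  assert (Hx0 : 0 < x) by apply exp_pos.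
  assert (Hxx : eps * (x * x) = 1) by apply Rpower_neg_half_sq, He.
  assert (Hx1 : 1 < x).
  { assert (0 < (1 - eps) * (x * x)) by (apply Rmult_lt_0_compat; nra). nra. }
  destruct (archimed x) as [U1 U2].
  exists (Z.to_nat (up x)).
  assert (Hk : INR (Z.to_nat (up x)) = IZR (up x))
    by (rewrite INR_IZR_INZ, Z2Nat.id; [reflexivity| apply le_IZR; simpl; lra]).
  rewrite pow_INR, Hk. simpl INR. rewrite <- Rpower_pow by lra.
  split; [apply INR_le; rewrite Hk; simpl; lra|]. split.
  - apply Rle_Rpower; lra.
  - assert (IZR (up x) ^ 2 <= 4 * (x * x)) by nra.
    apply Rmult_le_reg_r with (96 * (24 * IZR (up x) ^ 2)); [nra|].
    field_simplify; nra.
Qed.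

Theorem theorem5 :
  exists (c1 c2 eps0 : R), 0 < c1 /\ 0 < c2 /\ 0 < eps0 /\
  forall eps : R, 0 < eps -> eps < eps0 ->
  exists (N : nat) (f : nat -> R -> R),
    Rpower 2 (c1 * Rpower eps (- (1 / 2))) <= INR N /\
    (forall i, (i < N)%nat -> nondec_pdf_on_01 (f i)) /\
    (forall i j, (i < N)%nat -> (j < N)%nat -> i <> j ->
       Rbar_le (Finite (c2 * eps)) (levy_dist (cdf_of (f i)) (cdf_of (f j)))).
Proof.
  exists 1, (1 / 96), 1. split; [lra|split; [lra|split; [lra|]]].
  intros eps He He1.
  destruct (grid_size eps (conj He He1)) as [k [Hk [Hcount Hsep]]].
  exists (2 ^ k)%nat, (density (2 * k)).
  split; [|split].
  - rewrite Rmult_1_l. exact Hcount.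
  - intros i _. exact (density_nondec_pdf k i Hk).
  - intros i j Hi Hj Hij.
    apply Rbar_le_trans with (Finite (/ (24 * INR k ^ 2))).
    + simpl. replace (1 / 96 * eps) with (eps / 96) by field. exact Hsep.
    + exact (density_levy_separation k i j Hk Hi Hj Hij).
Qed.
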